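(* There is a computable operator $G:2^\mathbb{N}\times\mathbb{N}\to\mathbb{Q}$ such that whenever $f$ is the diagram of a linear order $L$ (with domain $\mathbb{N}$), the map $t\mapsto G(f;t)$ is a faithful embedding of $L$ into $\mathbb{R}$.
   Context: The diagram of a linear order $L=(\mathbb{N},\le_L)$ is the characteristic function of $\{\langle s,t\rangle:s\le_L t\}$ under a standard pairing. For a set $X\subseteq\mathbb{R}$, an adjacency of $X$ is a pair $a<b$ in $X$ with $(a,b)\cap X=\emptyset$. An order monomorphism $F:L\to\mathbb{R}$ is faithful if every adjacency of the closure $\overline{\operatorname{ran}(F)}$ is an adjacency of $\operatorname{ran}(F)$. *)

From HB Require Import structures.
From mathcomp Require Import all_boot all_order all_algebra.
From mathcomp Require Import all_classical all_reals all_analysis.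
From mathcomp Require Import Rstruct Rstruct_topology.
From Stdlib Require Import Rdefinitions.

Set Implicit Arguments.
Unset Strict Implicit.
Unset Printing Implicit Defensive.
Import Order.TTheory GRing.Theory Num.Theory.
Local Open Scope classical_set_scope.
Local Open Scope ring_scope.

(* Missing arguments default to 0; this keeps every term total and
   primitive recursive. *)
Inductive prf : Type :=
| PZero : prf
| PSucc : prf
| PProj : nat -> prf
| PComp : prf -> seq prf -> prf
| PRec  : prf -> prf -> prf.

Fixpoint prf_eval (p : prf) (xs : seq nat) {struct p} : nat :=
  match p with
  | PZero => 0%N
  | PSucc => (head 0%N xs).+1
  | PProj i => nth 0%N xs i
  | PComp g hs =>
      prf_eval g ((fix evl (l : seq prf) : seq nat :=
                     match l with
                     | [::] => [::]
                     | h :: l' => prf_eval h xs :: evl l'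
                     end) hs)
  | PRec g h =>
      let ys := behead xs in
      (fix r (n : nat) : nat :=
         match n with
         | 0 => prf_eval g ys
         | m.+1 => prf_eval h (m :: r m :: ys)
         end) (head 0%N xs)
  end.

Definition prefix_code (f : nat -> bool) (n : nat) : nat :=
  \big[addn/0%N]_(i < n) muln (nat_of_bool (f i)) (expn 2 i).

Definition int_of_nat (k : nat) : int :=
  if odd k then - (k./2.+1)%:Z else (k./2)%:Z.

(* Kleene normal form of Type-2 computability: G is computable iff there are
   primitive recursive h0, hnum, hden such that, on input the length-n prefix
   of the oracle and t, h0 <> 0 signals "halted with output
   int_of_nat(hnum)/(hden+1)"; every computation halts on some prefix and
   every halting output is the value G(f;t). *)
Definition computable_op (G : (nat -> bool) -> nat -> rat) : Prop :=
  exists h0 hnum hden : prf,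
    forall (f : nat -> bool) (t : nat),
      (exists n, prf_eval h0 [:: n; prefix_code f n; t] != 0%N) /\
      (forall n, prf_eval h0 [:: n; prefix_code f n; t] != 0%N ->
         G f t = (int_of_nat (prf_eval hnum [:: n; prefix_code f n; t]))%:~R
                 / ((prf_eval hden [:: n; prefix_code f n; t]).+1)%:R).

Definition linear_order (le : rel nat) : Prop :=
  [/\ reflexive le, antisymmetric le, transitive le & total le].

Definition cpair (s t : nat) : nat := addn (half (muln (addn s t) (addn s t).+1)) t.

Definition is_diagram (f : nat -> bool) (le : rel nat) : Prop :=
  forall s t, f (cpair s t) = le s t.

Definition order_mono (le : rel nat) (F : nat -> R) : Prop :=
  forall s t, s != t -> le s t -> F s < F t.

Definition adjacency (X : set R) (a b : R) : Prop :=
  [/\ X a, X b, a < b & forall x, a < x -> x < b -> ~ X x].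

Definition faithful (F : nat -> R) : Prop :=
  forall a b, adjacency (closure (range F)) a b -> adjacency (range F) a b.

(* Insert 0, 1, 2, ... in this order into a binary search tree for L, attach
   (0, 1) to the root and the two halves of the interval of a node to its
   children, and send t to the midpoint of the interval of its node.  This is
   an order embedding into the dyadic rationals, computable from the diagram on
   {0, ..., t}^2: the ancestors of t are the r < t such that no q < r lies
   between r and t in L.
   It is faithful: let a < b be an adjacency of the closure of the range with,
   say, a outside the range.  Points of the range accumulate at a, so every
   node interval containing [a, b] meets the range and is split at its
   midpoint, a point of the range that lies outside (a, b).  Hence [a, b] lies
   in node intervals of every length 2^-k, which is absurd. *)

From HB Require Import structures.
From mathcomp Require Import all_boot all_order all_algebra.
From mathcomp Require Import all_classical all_reals all_analysis.
From mathcomp Require Import Rstruct Rstruct_topology.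
From mathcomp Require Import lra zify.
Import Order.TTheory GRing.Theory Num.Theory numFieldNormedType.Exports.

Set Implicit Arguments.
Unset Strict Implicit.
Unset Printing Implicit Defensive.

(** * Primitive recursive programs *)

Lemma prf_eval_comp g hs xs :
  prf_eval (PComp g hs) xs = prf_eval g [seq prf_eval h xs | h <- hs].
Proof. by rewrite /=; congr (prf_eval g _); elim: hs => //= h hs ->. Qed.

Lemma prf_eval_rec0 g h ys : prf_eval (PRec g h) (0 :: ys) = prf_eval g ys.
Proof. by []. Qed.

Lemma prf_eval_recS g h m ys :
  prf_eval (PRec g h) (m.+1 :: ys) = prf_eval h [:: m, prf_eval (PRec g h) (m :: ys) & ys].
Proof. by []. Qed.

Definition constp k := iter k (fun p => PComp PSucc [:: p]) PZero.

Lemma constpE k xs : prf_eval (constp k) xs = k.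
Proof. by elim: k => //= k ->. Qed.
(* Each program is made opaque once specified, so that [/=] keeps it folded. *)
Opaque constp.

Definition addp := PRec (PProj 0) (PComp PSucc [:: PProj 1]).

Lemma addpE a b xs : prf_eval addp [:: a, b & xs] = a + b.
Proof. by rewrite /addp; elim: a => // a IH; rewrite prf_eval_recS IH. Qed.
Opaque addp.

Definition mulp := PRec PZero (PComp addp [:: PProj 1; PProj 2]).

Lemma mulpE a b xs : prf_eval mulp [:: a, b & xs] = a * b.
Proof.
rewrite /mulp; elim: a => // a IH.
by rewrite prf_eval_recS IH prf_eval_comp /= addpE mulSn addnC.
Qed.
Opaque mulp.

Definition predp := PRec PZero (PProj 0).

Lemma predpE a xs : prf_eval predp (a :: xs) = a.-1.
Proof. by case: a. Qed.
Opaque predp.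

Definition subp := PComp (PRec (PProj 0) (PComp predp [:: PProj 1])) [:: PProj 1; PProj 0].

Lemma subpE a b xs : prf_eval subp [:: a, b & xs] = a - b.
Proof.
rewrite /subp prf_eval_comp [map _ _]/=; elim: b => [|b IH]; first by rewrite subn0.
by rewrite prf_eval_recS IH prf_eval_comp /= predpE subnS.
Qed.
Opaque subp.

Definition halfp := PRec PZero (PComp subp [:: PProj 0; PProj 1]).

Lemma halfpE a xs : prf_eval halfp (a :: xs) = a./2.
Proof.
rewrite /halfp; elim: a => // a IH; rewrite prf_eval_recS IH prf_eval_comp /= subpE.
by have := odd_double_half a; rewrite uphalf_half; lia.
Qed.
Opaque halfp.

Definition oddp := PRec PZero (PComp subp [:: constp 1; PProj 1]).

Lemma oddpE a xs : prf_eval oddp (a :: xs) = odd a.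
Proof.
rewrite /oddp; elim: a => // a IH.
by rewrite prf_eval_recS IH prf_eval_comp /= constpE subpE; case: (odd a).
Qed.
Opaque oddp.

Definition pow2p := PRec (constp 1) (PComp mulp [:: constp 2; PProj 1]).

Lemma pow2pE a xs : prf_eval pow2p (a :: xs) = 2 ^ a.
Proof.
rewrite /pow2p; elim: a => [|a IH]; first by rewrite prf_eval_rec0 constpE.
by rewrite prf_eval_recS IH prf_eval_comp /= constpE mulpE expnS.
Qed.
Opaque pow2p.

Definition divpow2p := PRec (PProj 0) (PComp halfp [:: PProj 1]).

Lemma divpow2pE k c xs : prf_eval divpow2p [:: k, c & xs] = c %/ 2 ^ k.
Proof.
rewrite /divpow2p; elim: k => [|k IH]; first by rewrite divn1.
by rewrite prf_eval_recS IH prf_eval_comp /= halfpE -divn2 -divnMA expnSr.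
Qed.
Opaque divpow2p.

Definition shiftp (body : prf) n :=
  PComp body (PProj 0 :: [seq PProj j.+2 | j <- iota 0 n]).

Lemma shiftpE body k r xs :
  prf_eval (shiftp body (size xs)) [:: k, r & xs] = prf_eval body (k :: xs).
Proof. by rewrite prf_eval_comp /= -map_comp; congr (prf_eval body (k :: _)); apply: mkseq_nth. Qed.
Opaque shiftp.

Definition sump (body : prf) n := PRec PZero (PComp addp [:: PProj 1; shiftp body n]).

Lemma sumpE body k xs :
  prf_eval (sump body (size xs)) (k :: xs) = \sum_(0 <= i < k) prf_eval body (i :: xs).
Proof.
elim: k => [|k IH]; first by rewrite big_geq.
by rewrite prf_eval_recS IH prf_eval_comp /= addpE shiftpE big_nat_recr.
Qed.
Opaque sump.

(* Variables are de Bruijn indices into the environment: [ESum m body] binds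
   the summation index as variable 0 of [body]. *)
Inductive pexpr : Type :=
| EVar of nat
| EConst of nat
| EApp of prf & pexpr & pexpr & pexpr
| ESum of pexpr & pexpr.

Fixpoint pexpr_eval (e : pexpr) (env : seq nat) : nat :=
  match e with
  | EVar i => nth 0 env i
  | EConst k => k
  | EApp p a b c => prf_eval p [:: pexpr_eval a env; pexpr_eval b env; pexpr_eval c env]
  | ESum m body => \sum_(0 <= i < pexpr_eval m env) pexpr_eval body (i :: env)
  end.

Fixpoint compile (n : nat) (e : pexpr) : prf :=
  match e with
  | EVar i => PProj i
  | EConst k => constp k
  | EApp p a b c => PComp p [:: compile n a; compile n b; compile n c]
  | ESum m body => PComp (sump (compile n.+1 body) n) (compile n m :: [seq PProj j | j <- iota 0 n])
  end.

Lemma compileE e xs : prf_eval (compile (size xs) e) xs = pexpr_eval e xs.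
Proof.
elim: e xs => [i | k | p a IHa b IHb c IHc | m IHm body IHbody] xs.
- by [].
- exact: constpE.
- by rewrite [compile _ _]/= prf_eval_comp [map _ _]/= IHa IHb IHc.
- rewrite [compile _ _]/= prf_eval_comp [map _ _]/= IHm -map_comp.
  have -> : [seq (prf_eval^~ xs \o PProj) j | j <- iota 0 (size xs)] = xs by apply: mkseq_nth.
  by rewrite sumpE /=; apply: eq_bigr => i _; apply: IHbody (i :: xs).
Qed.

Lemma compile3E e a b c : prf_eval (compile 3 e) [:: a; b; c] = pexpr_eval e [:: a; b; c].
Proof. exact: compileE e [:: a; b; c]. Qed.

(** * Dyadic positions in a binary search tree *)

Lemma ltn_neq m n : m < n -> m != n.
Proof. by rewrite ltn_neqAle => /andP []. Qed.

Section BinarySearchTree.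

Variable le : rel nat.

Definition between q r t := (le r q && le q t) || (le t q && le q r).

(* For [r < t]: [r] is an ancestor of [t] in the binary search tree obtained by
   inserting 0, 1, 2, ... in this order. *)
Definition ancestor r t := all (fun q => ~~ between q r t) (iota 0 r).

Definition depth s t := \sum_(0 <= r < s) ancestor r t.

Lemma depthS s t : depth s.+1 t = depth s t + ancestor s t.
Proof. by rewrite /depth big_nat_recr. Qed.

Lemma depth_le s t : depth s t <= s.
Proof.
elim: s => [|s IH]; first by rewrite /depth big_geq.
by rewrite depthS; case: (ancestor s t); lia.
Qed.

Definition pos_num t :=
  \sum_(0 <= r < t) (ancestor r t && le r t) * 2 ^ (t - depth r t) + 2 ^ (t - depth t t).

Hypothesis le_lin : linear_order le.

Lemma le_neq_total x y : x != y -> le y x = ~~ le x y.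
Proof.
case: le_lin => _ anti _ tot nxy; have := tot x y; have := anti x y.
by case: (le x y); case: (le y x) => //= /(_ isT) exy; rewrite exy eqxx in nxy.
Qed.

Lemma le_cycle x y z : le x y -> le y z -> le z x -> x = y.
Proof. by case: le_lin => _ anti tr _ xy yz zx; apply: anti; rewrite xy (tr _ _ _ yz zx). Qed.

Lemma between_le q r t : q != t -> between q r t -> le r t -> le r q && le q t.
Proof.
move=> qt /orP [//| /andP [tq qr] rt].
by have := le_cycle tq qr rt; move/eqP; rewrite eq_sym (negbTE qt).
Qed.

Lemma between_sym q r t : between q r t = between q t r.
Proof. by rewrite /between orbC. Qed.

Lemma ancestor_le s t r : s < t -> ancestor s t -> r < s -> le r s = le r t.
Proof.
move=> st /allP anc rs; have := anc r; rewrite mem_iota /between => /(_ rs).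
rewrite (le_neq_total (ltn_neq rs)) (le_neq_total (ltn_neq (ltn_trans rs st))).
by case: (le r s); case: (le r t).
Qed.

Lemma ancestor_ancestor s t r : s < t -> ancestor s t -> r < s ->
  ancestor r s = ancestor r t.
Proof.
move=> st anc rs; apply: eq_in_all => q; rewrite mem_iota /= => qr.
have qs := ltn_trans qr rs; have qt := ltn_trans qs st.
rewrite /between (le_neq_total (ltn_neq qs)) (le_neq_total (ltn_neq qt)).
by rewrite !(ancestor_le st anc).
Qed.

Lemma depth_ancestor s t r : s < t -> ancestor s t -> r <= s ->
  depth r s = depth r t.
Proof.
move=> st anc; elim: r => [|r IH rs]; first by rewrite /depth !big_geq.
by rewrite !depthS IH 1?ltnW // (ancestor_ancestor st anc rs).
Qed.

Local Open Scope ring_scope.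

Context {R : realFieldType}.

(* Once [0, ..., s-1] have been inserted, [t] lies in the dyadic cell between
   [cell_lo s t] and [cell_hi s t]; each ancestor of [t] halves it. *)
Definition cell_lo s t : R :=
  \sum_(0 <= r < s | ancestor r t && le r t) 2 ^- (depth r t).+1.

Definition cell_len s t : R := 2 ^- depth s t.

Definition cell_hi s t := cell_lo s t + cell_len s t.

Definition pos t := cell_lo t t + cell_len t t / 2.

Lemma exp2VS n : 2 ^- n.+1 = 2 ^- n / 2 :> R.
Proof. by rewrite exprSr invfM. Qed.

Lemma cell_loS s t : cell_lo s.+1 t =
  cell_lo s t + (if ancestor s t && le s t then cell_len s t / 2 else 0).
Proof. by rewrite /cell_lo !(big_mkcond (fun r => _ && _)) big_nat_recr //= exp2VS. Qed.

Lemma cell_lenS s t :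
  cell_len s.+1 t = if ancestor s t then cell_len s t / 2 else cell_len s t.
Proof. by rewrite /cell_len depthS; case: (ancestor s t); rewrite ?addn1 ?addn0 ?exp2VS. Qed.

Lemma cell_len_gt0 s t : 0 < cell_len s t.
Proof. by rewrite invr_gt0 exprn_gt0. Qed.

Lemma cell_nested s t :
  cell_lo s t <= cell_lo s.+1 t /\ cell_hi s.+1 t <= cell_hi s t.
Proof.
rewrite /cell_hi cell_loS cell_lenS; have := cell_len_gt0 s t.
by case: (ancestor s t) (le s t) => -[] /=; lra.
Qed.

Lemma cell_lo_ge0 s t : 0 <= cell_lo s t.
Proof. by apply: sumr_ge0 => r _; rewrite invr_ge0 exprn_ge0. Qed.

Lemma cell_hi_le1 s t : cell_hi s t <= 1.
Proof.
elim: s => [|s IH]; last by apply: le_trans IH; case: (cell_nested s t).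
by rewrite /cell_hi /cell_lo /cell_len big_geq // add0r /depth big_geq // invr1.
Qed.

Lemma pos_gt_lo t : cell_lo t t < pos t.
Proof. by have := cell_len_gt0 t t; rewrite /pos; lra. Qed.

Lemma pos_lt_hi t : pos t < cell_hi t t.
Proof. by have := cell_len_gt0 t t; rewrite /pos /cell_hi; lra. Qed.

Lemma pos_gt0 t : 0 < pos t.
Proof. exact: le_lt_trans (cell_lo_ge0 t t) (pos_gt_lo t). Qed.

Lemma pos_lt1 t : pos t < 1.
Proof. exact: lt_le_trans (pos_lt_hi t) (cell_hi_le1 t t). Qed.

Lemma pos_numE t : (pos_num t)%:R / (2 ^ t.+1)%:R = pos t :> R.
Proof.
have scale d : (d <= t)%N -> (2 ^ (t - d))%:R / (2 ^ t.+1)%:R = 2 ^- d.+1 :> R.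
  move=> dt; have -> : t.+1 = (t - d + d.+1)%N by rewrite addnS subnK.
  rewrite expnD natrM !natrX invfM mulrA mulfV ?mul1r //.
rewrite /pos_num natrD mulrDl natr_sum mulr_suml /pos /cell_lo.
congr (_ + _); last by rewrite scale ?depth_le // /cell_len -exp2VS.
rewrite [RHS]big_mkcond; apply: eq_big_nat => r /andP [_ rt].
case: (_ && _); rewrite ?mul1n ?mul0n ?mul0r // scale //.
exact: leq_trans (depth_le r t) (ltnW rt).
Qed.

Lemma pos_ancestor s t : (s < t)%N -> ancestor s t ->
  pos s = cell_lo s t + cell_len s t / 2.
Proof.
move=> st anc; rewrite /pos /cell_len (depth_ancestor st anc (leqnn s)); congr (_ + _).
apply: congr_big_nat => // r.
  by case/andP=> _ rs; rewrite (ancestor_ancestor st anc rs) (ancestor_le st anc rs).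
by case/and3P=> _ _ rs; rewrite (depth_ancestor st anc (ltnW rs)).
Qed.

Lemma cell_separates t :
    (forall x y, (x < t)%N -> (y < t)%N -> x != y -> le x y -> pos x < pos y) ->
  forall s r, (s <= t)%N -> (r < s)%N ->
  (le r t -> pos r <= cell_lo s t) /\ (le t r -> cell_hi s t <= pos r).
Proof.
move=> mono; elim=> // s IH r st; rewrite ltnS leq_eqVlt => /orP [/eqP -> {r} | rs]; last first.
  have [lo_le hi_le] := cell_nested s t; have [IH1 IH2] := IH r (ltnW st) rs.
  by split=> H; [apply: le_trans (IH1 H) lo_le | apply: le_trans hi_le (IH2 H)].
rewrite /cell_hi cell_loS cell_lenS; case anc: (ancestor s t).
  rewrite (pos_ancestor st anc); split=> H; first by rewrite H /=; lra.
  have ts : t != s by rewrite eq_sym ltn_neq.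
  by rewrite (le_neq_total ts) H /=; lra.
rewrite andFb addr0; have /allPn [q] : ~~ ancestor s t by rewrite anc.
rewrite mem_iota negbK => /andP [_ qs] btw; have qt := ltn_trans qs st.
split=> H.
  have /andP [sq qt'] := between_le (ltn_neq qt) btw H.
  apply: ltW (lt_le_trans _ ((IH q (ltnW st) qs).1 qt')).
  by apply: mono => //; rewrite eq_sym ltn_neq.
rewrite between_sym in btw; have /andP [tq qs'] := between_le (ltn_neq qs) btw H.
apply: le_trans ((IH q (ltnW st) qs).2 tq) (ltW _).
by apply: mono => //; rewrite ltn_neq.
Qed.

Lemma pos_lt_of_le x y : x != y -> le x y -> pos x < pos y.
Proof.
suff mono n x' y' : (x' < n)%N -> (y' < n)%N -> x' != y' -> le x' y' -> pos x' < pos y'.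
  by apply: (mono (maxn x y).+1); rewrite ltnS ?leq_maxl ?leq_maxr.
elim: n x' y' => // n IH x' y'.
rewrite ltnS leq_eqVlt => /predU1P [-> | xn]; rewrite ltnS leq_eqVlt => /predU1P [-> | yn].
- by rewrite eqxx.
- by move=> _ ny; apply: lt_le_trans (pos_lt_hi n) ((cell_separates IH (leqnn n) yn).2 ny).
- by move=> _ xny; apply: le_lt_trans ((cell_separates IH (leqnn n) xn).1 xny) (pos_gt_lo n).
- exact: IH.
Qed.

Lemma pos_ltE x y : x != y -> (pos x < pos y) = le x y.
Proof.
move=> nxy; apply/idP/idP; last exact: pos_lt_of_le.
apply: contraLR => nlxy; rewrite -leNgt ltW // pos_lt_of_le 1?eq_sym //.
by rewrite le_neq_total.
Qed.

Definition stage_cell m (l h : R) :=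
  (forall t, (m <= t)%N -> l < pos t < h -> cell_lo m t = l /\ cell_hi m t = h) /\
  (forall r, (r < m)%N -> ~~ (l < pos r < h)).

Lemma stage_cell0 : stage_cell 0 0 1.
Proof.
split=> // t _ _.
by rewrite /cell_hi /cell_lo /cell_len /depth !big_geq // add0r expr0 invr1.
Qed.

Lemma cell_stable m s t : (m <= s)%N -> (s <= t)%N ->
    (forall q, (m <= q < s)%N -> ~~ (cell_lo m t < pos q < cell_hi m t)) ->
  cell_lo s t = cell_lo m t /\ cell_len s t = cell_len m t.
Proof.
elim: s => [|s IH] ms st gap; first by move: ms; rewrite leqn0 => /eqP ->.
move: ms; rewrite leq_eqVlt ltnS => /orP [/eqP -> // | ms].
have [lo_eq len_eq] : cell_lo s t = cell_lo m t /\ cell_len s t = cell_len m t.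
  by apply: IH ms (ltnW st) _ => q /andP [mq qs]; apply: gap; rewrite mq ltnW.
have anc : ancestor s t = false.
  apply/negP => anc; have := gap s; rewrite ms ltnSn /cell_hi => /(_ isT) /negP; apply.
  by rewrite (pos_ancestor st anc) lo_eq len_eq; have := cell_len_gt0 m t; lra.
by rewrite cell_loS cell_lenS anc addr0.
Qed.

Lemma ancestor_of_cell (l h : R) r t : (r < t)%N -> l < pos r < h -> l < pos t < h ->
  (forall q, (q < r)%N -> ~~ (l < pos q < h)) -> ancestor r t.
Proof.
move=> rt /andP [lr rh] /andP [lt th] early; apply/allP => q; rewrite mem_iota /= => qr.
apply/negP => btw; move/negP: (early q qr); apply; have qt := ltn_trans qr rt.
case: le_lin => _ _ _ /(_ r t) /orP [le_rt | le_tr].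
  have /andP [rq qt'] := between_le (ltn_neq qt) btw le_rt.
  have := pos_lt_of_le (ltn_neq qt) qt'; have := pos_lt_of_le _ rq.
  by rewrite eq_sym ltn_neq // => /(_ isT); lra.
rewrite between_sym in btw; have /andP [tq qr'] := between_le (ltn_neq qr) btw le_tr.
have := pos_lt_of_le (ltn_neq qr) qr'; have := pos_lt_of_le _ tq.
by rewrite eq_sym ltn_neq // => /(_ isT); lra.
Qed.

Lemma cell_split m (l h : R) x : stage_cell m l h -> l < pos x < h ->
  exists t, [/\ pos t = (l + h) / 2, stage_cell t.+1 l (pos t) & stage_cell t.+1 (pos t) h].
Proof.
move=> [cell_m early_m] Px; pose P t := l < pos t < h.
have [t Pt t_min] := ex_minnP (ex_intro P x Px).
have early q : (q < t)%N -> ~~ P q by move=> qt; apply/negP => /t_min; rewrite leqNgt qt.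
have mt : (m <= t)%N by rewrite leqNgt; apply/negP => tm; move/negP: (early_m t tm).
have cell_t t' : (t <= t')%N -> P t' -> cell_lo t t' = l /\ cell_len t t' = h - l.
  move=> tt' Pt'; have [lo_m hi_m] := cell_m t' (leq_trans mt tt') Pt'.
  have [-> ->] : cell_lo t t' = cell_lo m t' /\ cell_len t t' = cell_len m t'.
    by apply: cell_stable mt tt' _ => q /andP [_ qt]; rewrite lo_m hi_m; apply: early.
  by split=> //; rewrite -hi_m -lo_m /cell_hi addrC addKr.
have pos_t : pos t = (l + h) / 2.
  by have [lo_t len_t] := cell_t t (leqnn t) Pt; rewrite /pos lo_t len_t; lra.
have cell_next t' : (t < t')%N -> P t' ->
    cell_lo t.+1 t' = (if pos t < pos t' then pos t else l) /\
    cell_hi t.+1 t' = (if pos t < pos t' then h else pos t).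
  move=> tt' Pt'; have [lo_t' len_t'] := cell_t t' (ltnW tt') Pt'.
  rewrite /cell_hi cell_loS cell_lenS (ancestor_of_cell tt' Pt Pt' early).
  by rewrite (pos_ltE (ltn_neq tt')) lo_t' len_t' pos_t; case: (le t t') => /=; split; lra.
move: (Pt) => /andP [lt th].
have early_half r (l' h' : R) : (r < t.+1)%N -> l <= l' -> h' <= h ->
    (l' = pos t \/ h' = pos t) -> ~~ (l' < pos r < h').
  rewrite ltnS leq_eqVlt => /orP [/eqP -> _ _ [] -> | rt ll' hh' _]; rewrite ?ltxx ?andbF //.
  by apply: contra (early r rt) => /andP [lr rh]; rewrite /P (le_lt_trans ll' lr) (lt_le_trans rh hh').
exists t; split=> //; split=> [t' tt' /andP [lt' t'_lt] | r rt].
- have Pt' : P t' by rewrite /P lt' (lt_trans t'_lt th).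
  have := cell_next t' tt' Pt'; suff -> : (pos t < pos t') = false by [].
  by apply/negbTE; rewrite -leNgt ltW.
- by apply: early_half => //; [apply: ltW | right].
- have Pt' : P t' by rewrite /P (lt_trans lt lt') t'_lt.
  by have := cell_next t' tt' Pt'; rewrite lt'.
- by apply: early_half => //; [apply: ltW | left].
Qed.

End BinarySearchTree.

Lemma pos_num_ext (le1 le2 : rel nat) t :
    (forall s u, s <= t -> u <= t -> le1 s u = le2 s u) ->
  pos_num le1 t = pos_num le2 t.
Proof.
move=> E.
have anc r : r <= t -> ancestor le1 r t = ancestor le2 r t.
  move=> rt; apply: eq_in_all => q; rewrite mem_iota /= => qr.
  by have qt := ltnW (leq_trans qr rt); rewrite /between !E.
have dep r : r <= t -> depth le1 r t = depth le2 r t.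
  by move=> rt; apply: eq_big_nat => q /andP [_ qr]; rewrite anc // ltnW // (leq_trans qr rt).
rewrite /pos_num dep //; congr (_ + _).
by apply: eq_big_nat => r /andP [_ rt]; rewrite anc ?E ?dep // ltnW.
Qed.

(** * Faithfulness by bisection *)

Section Bisection.

Local Open Scope ring_scope.

Lemma exists_exp2V_lt (K : archiRealFieldType) (e : K) : 0 < e -> exists k, 2 ^- k < e.
Proof.
move=> e0; have [N _ HN] := near_infty_natSinv_expn_lt (PosNum e0).
by exists N; rewrite -div1r; apply: HN => /=.
Qed.


Variables (R : realType) (S : set R) (C : R -> R -> Prop).
Hypothesis S_gt0_lt1 : forall x, S x -> 0 < x < 1.
Hypothesis C01 : C 0 1.
Hypothesis C_bisect : forall l h x, C l h -> S x -> l < x < h ->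
  [/\ S ((l + h) / 2), C l ((l + h) / 2) & C ((l + h) / 2) h].

Variables a b : R.
Hypotheses (Ca : closure S a) (Cb : closure S b) (ab : a < b).
Hypothesis gap : forall x, a < x -> x < b -> ~ S x.

Lemma closure_gap_left : ~ S a -> forall l, l < a -> exists2 x, S x & l < x < a.
Proof.
move=> nSa l la.
have e0 : 0 < Num.min (a - l) (b - a) by rewrite lt_min !subr_gt0 la ab.
have [x [Sx]] := Ca (nbhsx_ballx a _ e0); rewrite /ball /= lt_min => /andP [d1 d2].
exists x => //; have [_ | ax] := ltrP x a.
  by rewrite andbT; move: d1; rewrite ltr_norml => /andP [_ d1]; lra.
move: d2; rewrite ltr_norml => /andP [d2 _]; exfalso; apply: (@gap x) => //; last by lra.
by rewrite lt_neqAle ax andbT; apply/eqP => ax'; rewrite ax' in nSa.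
Qed.

Lemma closure_gap_right : ~ S b -> forall h, b < h -> exists2 x, S x & b < x < h.
Proof.
move=> nSb h bh.
have e0 : 0 < Num.min (h - b) (b - a) by rewrite lt_min !subr_gt0 bh ab.
have [x [Sx]] := Cb (nbhsx_ballx b _ e0); rewrite /ball /= lt_min => /andP [d1 d2].
exists x => //; have [_ | xb] := ltrP b x.
  by move: d1; rewrite ltr_norml => /andP [d1 _]; lra.
move: d2; rewrite ltr_norml => /andP [_ d2]; exfalso; apply: (@gap x) => //; first by lra.
by rewrite lt_neqAle xb andbT; apply/eqP => xb'; rewrite -xb' in nSb.
Qed.

Lemma gap_gt0 : 0 < a.
Proof.
have [/S_gt0_lt1 /andP [] // | nSa] := pselect (S a).
have a1 : a - 1 < a by lra.
by have [y /S_gt0_lt1 /andP [y0 _] /andP [_ ya]] := closure_gap_left nSa a1; lra.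
Qed.

Lemma gap_lt1 : b < 1.
Proof.
have [/S_gt0_lt1 /andP [] // | nSb] := pselect (S b).
have b1 : b < b + 1 by lra.
by have [y /S_gt0_lt1 /andP [_ y1] /andP [b_lt_y _]] := closure_gap_right nSb b1; lra.
Qed.

Lemma gap_cover_meets l h : ~ S a \/ ~ S b -> l <= a -> b <= h ->
  (l = 0 \/ S l) -> (h = 1 \/ S h) -> exists2 x, S x & l < x < h.
Proof.
move=> [nSa | nSb] la bh Sl Sh.
  have la' : l < a.
    rewrite lt_neqAle la andbT; apply/eqP => la_eq; have := gap_gt0.
    by case: Sl => [l0 | Sl]; [lra | rewrite la_eq in Sl].
  have [x Sx /andP [lx xa]] := closure_gap_left nSa la'.
  by exists x => //; rewrite lx (lt_le_trans (lt_trans xa ab) bh).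
have bh' : b < h.
  rewrite lt_neqAle bh andbT; apply/eqP => bh_eq; have := gap_lt1.
  by case: Sh => [h1 | Sh]; [lra | rewrite -bh_eq in Sh].
have [x Sx /andP [bx xh]] := closure_gap_right nSb bh'.
by exists x => //; rewrite xh andbT (le_lt_trans la (lt_trans ab bx)).
Qed.

Lemma gap_ends_in_set : S a /\ S b.
Proof.
apply: contrapT => /not_andP nS.
have nested k : exists l h, [/\ C l h, l <= a, b <= h, h - l <= 2 ^- k &
    (l = 0 \/ S l) /\ (h = 1 \/ S h)].
  elim: k => [|k [l [h [Clh la bh lh [Sl Sh]]]]].
    exists 0, 1; have := gap_gt0; have := gap_lt1.
    by split; rewrite ?expr0 ?invr1 ?subr0 //; [lra | lra | split; left].
  have [x Sx xlh] := gap_cover_meets nS la bh Sl Sh.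
  have [Sc Clc Cch] := C_bisect Clh Sx xlh.
  have [ca | bc] := lerP ((l + h) / 2) a.
    exists ((l + h) / 2), h; split=> //; last by split; [right | ].
    by rewrite exprSr invfM; lra.
  have cb : b <= (l + h) / 2.
    by rewrite leNgt; apply/negP => cb; apply: gap bc cb Sc.
  exists l, ((l + h) / 2); split=> //; last by split; [| right].
  by rewrite exprSr invfM; lra.
have [k kab] : exists k, 2 ^- k < b - a by apply: exists_exp2V_lt; rewrite subr_gt0.
by have [l [h [_ la bh lh _]]] := nested k; lra.
Qed.

End Bisection.

(** * Computing the positions from the diagram *)

Definition code_le (c : nat) : rel nat := fun s u => odd (c %/ 2 ^ cpair s u).

Definition diagram_le (f : nat -> bool) : rel nat := fun s u => f (cpair s u).

Lemma prefix_codeS f n : prefix_code f n.+1 = prefix_code f n + f n * 2 ^ n.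
Proof. by rewrite /prefix_code big_ord_recr. Qed.

Lemma prefix_code_lt f n : prefix_code f n < 2 ^ n.
Proof.
elim: n => [|n IH]; first by rewrite /prefix_code big_ord0.
by rewrite prefix_codeS expnS; case: (f n); lia.
Qed.

Lemma prefix_code_bit f n i : i < n -> odd (prefix_code f n %/ 2 ^ i) = f i.
Proof.
elim: n => // n IH; rewrite ltnS leq_eqVlt => /predU1P [-> | ilt].
  rewrite prefix_codeS addnC divnMDl ?expn_gt0 // divn_small ?prefix_code_lt // addn0.
  by case: (f n).
rewrite prefix_codeS (_ : 2 ^ n = 2 ^ i * 2 ^ (n - i)); last by rewrite -expnD subnKC // ltnW.
rewrite mulnA addnC mulnAC divnMDl ?expn_gt0 // oddD IH // oddM oddX.
by rewrite subn_eq0 leqNgt ilt andbF.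
Qed.

Lemma cpair_le_diag s u t : s <= t -> u <= t -> cpair s u <= cpair t t.
Proof. by move=> st ut; rewrite /cpair leq_add // half_leq // leq_mul; lia. Qed.

Lemma code_le_prefix f n t s u : cpair t t < n -> s <= t -> u <= t ->
  code_le (prefix_code f n) s u = diagram_le f s u.
Proof. by move=> tn st ut; rewrite /code_le prefix_code_bit // (leq_ltn_trans (cpair_le_diag st ut)). Qed.

Definition app1 p a := EApp p a (EConst 0) (EConst 0).
Definition app2 p a b := EApp p a b (EConst 0).

Definition cpairp := compile 3
  (app2 addp (app1 halfp (app2 mulp (app2 addp (EVar 0) (EVar 1))
                                    (app1 PSucc (app2 addp (EVar 0) (EVar 1)))))
             (EVar 1)).

Lemma cpairpE s u w : prf_eval cpairp [:: s; u; w] = cpair s u.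
Proof. by rewrite compile3E /= !addpE mulpE halfpE. Qed.
Opaque cpairp.

Definition lep :=
  compile 3 (app1 oddp (app2 divpow2p (EApp cpairp (EVar 0) (EVar 1) (EConst 0)) (EVar 2))).

Lemma lepE s u c : prf_eval lep [:: s; u; c] = code_le c s u.
Proof. by rewrite compile3E /= cpairpE divpow2pE oddpE. Qed.
Opaque lep.

Definition ancestorp :=
  let le i j := EApp lep (EVar i) (EVar j) (EVar 3) in
  compile 3 (app2 subp (EConst 1) (ESum (EVar 0)
    (app2 addp (app2 mulp (le 1 0) (le 0 2)) (app2 mulp (le 2 0) (le 0 1))))).

Lemma ancestorpE r t c : prf_eval ancestorp [:: r; t; c] = ancestor (code_le c) r t.
Proof.
rewrite compile3E /= subpE; under eq_bigr => q _ do rewrite addpE !mulpE !lepE.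
rewrite (_ : forall N, 1 - N = (N == 0)); last by case.
rewrite sum_nat_seq_eq0 /index_iota subn0; congr nat_of_bool; apply: eq_all => q.
by rewrite /between addn_eq0 !mulnb !eqb0 negb_or.
Qed.
Opaque ancestorp.

Definition depthp := compile 3 (ESum (EVar 0) (EApp ancestorp (EVar 0) (EVar 2) (EVar 3))).

Lemma depthpE s t c : prf_eval depthp [:: s; t; c] = depth (code_le c) s t.
Proof. by rewrite compile3E /=; apply: eq_bigr => r _; rewrite ancestorpE. Qed.
Opaque depthp.

Definition pos_nump := compile 3 (app2 addp
  (ESum (EVar 0) (app2 mulp
     (app2 mulp (EApp ancestorp (EVar 0) (EVar 1) (EVar 2)) (EApp lep (EVar 0) (EVar 1) (EVar 2)))
     (app1 pow2p (app2 subp (EVar 1) (EApp depthp (EVar 0) (EVar 1) (EVar 2))))))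
  (app1 pow2p (app2 subp (EVar 0) (EApp depthp (EVar 0) (EVar 0) (EVar 1))))).

Lemma pos_numpE t c w : prf_eval pos_nump [:: t; c; w] = pos_num (code_le c) t.
Proof.
rewrite compile3E /= addpE pow2pE subpE depthpE; congr addn.
by apply: eq_bigr => r _; rewrite !mulpE ancestorpE lepE pow2pE subpE depthpE mulnb.
Qed.
Opaque pos_nump.

(* The computation halts once the prefix of the oracle covers the diagram on
   [{0, ..., t}^2]. *)
Definition haltp := compile 3 (app2 subp (EVar 0) (EApp cpairp (EVar 2) (EVar 2) (EConst 0))).
Definition numerp := compile 3 (app2 mulp (EConst 2) (EApp pos_nump (EVar 2) (EVar 1) (EConst 0))).
Definition denomp := compile 3 (app2 subp (app1 pow2p (app1 PSucc (EVar 2))) (EConst 1)).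

Lemma haltpE n c t : prf_eval haltp [:: n; c; t] = n - cpair t t.
Proof. by rewrite compile3E /= subpE cpairpE. Qed.

Lemma numerpE n c t : prf_eval numerp [:: n; c; t] = 2 * pos_num (code_le c) t.
Proof. by rewrite compile3E /= mulpE pos_numpE. Qed.

Lemma denompE n c t : (prf_eval denomp [:: n; c; t]).+1 = 2 ^ t.+1.
Proof. by rewrite compile3E /= subpE pow2pE subn1 prednK // expn_gt0. Qed.

Lemma int_of_nat_double m : int_of_nat (2 * m) = m.
Proof. by rewrite /int_of_nat mul2n odd_double doubleK. Qed.

Definition G f t : rat := ((pos_num (diagram_le f) t)%:R / (2 ^ t.+1)%:R)%R.

Lemma G_computable : computable_op G.
Proof.
exists haltp, numerp, denomp => f t; split=> [|n].
  by exists (cpair t t).+1; rewrite haltpE subn_eq0 -ltnNge.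
rewrite haltpE subn_eq0 -ltnNge => tn; rewrite numerpE denompE int_of_nat_double.
rewrite /G -pmulrn; congr (_%:R / _)%R; apply: pos_num_ext => s u st ut.
by rewrite (code_le_prefix _ tn).
Qed.

Lemma ratr_G (R : realFieldType) f t : ratr (G f t) = pos (diagram_le f) t :> R.
Proof. by rewrite /G fmorph_div !rmorph_nat pos_numE. Qed.

(* Imported only now: it rebinds [^] on [nat] to [Nat.pow]. *)
From Stdlib Require Import Rdefinitions.

Local Open Scope ring_scope.

Lemma pos_faithful (le : rel nat) : linear_order le -> faithful (pos le).
Proof.
move=> le_lin a b [Ca Cb ab gapC].
have gap x : a < x -> x < b -> ~ range (pos le) x.
  by move=> ax xb /subset_closure; apply: gapC.
suff [Sa Sb] : range (pos le) a /\ range (pos le) b by [].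
apply: (gap_ends_in_set (C := fun l h => exists m, stage_cell le m l h)) Ca Cb ab gap.
- by move=> _ [t _ <-]; rewrite pos_gt0 pos_lt1.
- by exists 0; apply: stage_cell0.
move=> l h _ [m cell] [x _ <-] lxh.
have [t [pos_t lo_cell hi_cell]] := cell_split le_lin cell lxh.
by rewrite -pos_t; split; [exists t | exists t.+1 | exists t.+1].
Qed.

Theorem lemma5p10 :
  exists G : (nat -> bool) -> nat -> rat,
    computable_op G /\
    forall (f : nat -> bool) (le : rel nat),
      linear_order le -> is_diagram f le ->
      order_mono le (fun t => (ratr (G f t) : R)) /\
      faithful (fun t => (ratr (G f t) : R)).
Proof.
exists G; split; first exact: G_computable.
move=> f le le_lin diag.
have diag_le : diagram_le f = le by apply/funext => s; apply/funext => u; apply: diag.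
have -> : (fun t => ratr (G f t) : R) = pos le by apply/funext => t; rewrite ratr_G diag_le.
by split; [move=> s t; apply: pos_lt_of_le | apply: pos_faithful].
Qed.
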